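(* Let $n\ge 1$ and let $\mathrm{metric}$ be a performance metric of the form $$\mathrm{metric}(\hat{\mathbf y},\mathbf y)=\sum_{j=1}^{J}\frac{a_j\,\mathrm{TP}+b_j\,\mathrm{TN}+f_j(\mathrm{PP},\mathrm{AP})}{g_j(\mathrm{PP},\mathrm{AP})},\qquad \hat{\mathbf y},\mathbf y\in\{0,1\}^n .$$ Let $\mathcal P$ and $\mathcal Q$ be arbitrary probability distributions on $\{0,1\}^n$, and let $\hat{\mathbf Y}\sim\mathcal P$ and $\check{\mathbf Y}\sim\mathcal Q$ be independent. Then $$\mathbb E_{\hat{\mathbf Y}\sim\mathcal P,\ \check{\mathbf Y}\sim\mathcal Q}\big[\mathrm{metric}(\hat{\mathbf Y},\check{\mathbf Y})\big]=\sum_{k=0}^{n}\sum_{l=0}^{n}\sum_{j=1}^{J}\frac{1}{g_j(k,l)}\Big\{a_j\,[\mathbf p_k^1\cdot\mathbf q_l^1]+b_j\,[\mathbf p_k^0\cdot\mathbf q_l^0]+f_j(k,l)\,r_k\,s_l\Big\}.$$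
   Context: For $\hat{\mathbf y},\mathbf y\in\{0,1\}^n$ (first argument = prediction, second = reference label): $\mathrm{TP}=\sum_i\hat y_iy_i$, $\mathrm{TN}=\sum_i(1-\hat y_i)(1-y_i)$, $\mathrm{PP}=\sum_i\hat y_i$, $\mathrm{AP}=\sum_i y_i$. In the metric, $a_j,b_j\in\mathbb R$ are constants and $f_j,g_j:\{0,\dots,n\}^2\to\mathbb R$ are functions with $g_j(k,l)\neq 0$ for all $k,l$. Marginal notation: for $a\in\{0,1\}$ and $k\in\{0,\dots,n\}$, $\mathbf p_k^a\in\mathbb R^n$ has entries $(\mathbf p_k^a)_i=\mathcal P(\hat Y_i=a,\ \sum_{i'}\hat Y_{i'}=k)$ and $r_k=\mathcal P(\sum_i\hat Y_i=k)$; similarly $(\mathbf q_l^a)_i=\mathcal Q(\check Y_i=a,\ \sum_{i'}\check Y_{i'}=l)$ and $s_l=\mathcal Q(\sum_i\check Y_i=l)$. The dot denotes the Euclidean inner product on $\mathbb R^n$. *)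

From HB Require Import structures.
From mathcomp Require Import all_boot all_order all_algebra.
Set Implicit Arguments. Unset Strict Implicit. Unset Printing Implicit Defensive.
Import Order.TTheory GRing.Theory Num.Theory.
Local Open Scope ring_scope.

Definition bvec (n : nat) := {ffun 'I_n -> bool}.

Definition TP n (yh y : bvec n) : nat := (\sum_(i < n) (yh i && y i))%N.
Definition TN n (yh y : bvec n) : nat := (\sum_(i < n) (~~ yh i && ~~ y i))%N.
Definition PP n (yh : bvec n) : nat := (\sum_(i < n) yh i)%N.
Definition AP n (y : bvec n) : nat := (\sum_(i < n) y i)%N.

Definition metric (R : fieldType) n J (a b : 'I_J -> R)
    (f g : 'I_J -> nat -> nat -> R) (yh y : bvec n) : R :=
  \sum_(j < J) ((a j * (TP yh y)%:R + b j * (TN yh y)%:R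
                  + f j (PP yh) (AP y)) / g j (PP yh) (AP y)).

Definition is_distr (R : numDomainType) n (P : {ffun bvec n -> R}) : Prop :=
  (forall y, 0 <= P y) /\ \sum_(y : bvec n) P y = 1.

Definition expect2 (R : nzRingType) n (P Q : {ffun bvec n -> R})
    (F : bvec n -> bvec n -> R) : R :=
  \sum_(yh : bvec n) \sum_(yc : bvec n) P yh * Q yc * F yh yc.

(* (p_k^a)_i = P(Yh_i = a, sum Yh = k) *)
Definition marg (R : nzRingType) n (P : {ffun bvec n -> R}) (a : bool) (k : nat)
    (i : 'I_n) : R :=
  \sum_(y : bvec n | (y i == a) && (PP y == k)) P y.

(* r_k = P(sum Yh = k) *)
Definition mass (R : nzRingType) n (P : {ffun bvec n -> R}) (k : nat) : R :=
  \sum_(y : bvec n | PP y == k) P y.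

Definition dotv (R : nzRingType) n (u v : 'I_n -> R) : R := \sum_(i < n) u i * v i.

From HB Require Import structures.
From mathcomp Require Import all_boot all_order all_algebra.
From mathcomp Require Import ring.
Set Implicit Arguments. Unset Strict Implicit. Unset Printing Implicit Defensive.
Import Order.TTheory GRing.Theory Num.Theory.
Local Open Scope ring_scope.

(* Split the double sum defining the expectation according to the values
   k = PP yh and l = AP yc.  On the block (k, l) every g_j and f_j is constant,
   so by linearity only the block sums of TP and TN remain.  Since
   TP = sum_i yh_i yc_i, the block sum of P yh Q yc TP factors coordinatewise
   into p_k^1 . q_l^1, and likewise TN into p_k^0 . q_l^0. *)

Definition agree n (c : bool) (yh y : bvec n) : nat :=
  (\sum_(i < n) ((yh i == c) && (y i == c)))%N.

Lemma TP_agree n (yh y : bvec n) : TP yh y = agree true yh y.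
Proof. by rewrite /TP /agree; apply: eq_bigr => i _; rewrite !eqb_id. Qed.

Lemma TN_agree n (yh y : bvec n) : TN yh y = agree false yh y.
Proof. by rewrite /TN /agree; apply: eq_bigr => i _; rewrite !eqbF_neg. Qed.

Lemma PP_leq n (y : bvec n) : (PP y <= n)%N.
Proof.
rewrite -[leqRHS]card_ord -sum1_card.
by apply: leq_sum => i _; exact: leq_b1.
Qed.

Lemma sum_by_PP (V : nmodType) n (F : bvec n -> V) :
  \sum_y F y = \sum_(0 <= k < n.+1) \sum_(y | PP y == k) F y.
Proof.
rewrite [RHS](exchange_big_dep xpredT) //=; apply: eq_bigr => y _.
rewrite big_mkcond (bigD1_seq (PP y)) ?mem_index_iota ?ltnS ?PP_leq ?iota_uniq //=.
rewrite eqxx big1 ?addr0 // => k k_neq.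
by rewrite eq_sym (negbTE k_neq).
Qed.

Lemma sum2_by_PP (V : nmodType) n (F : bvec n -> bvec n -> V) :
  \sum_yh \sum_yc F yh yc =
  \sum_(0 <= k < n.+1) \sum_(0 <= l < n.+1)
    \sum_(yh | PP yh == k) \sum_(yc | PP yc == l) F yh yc.
Proof.
rewrite sum_by_PP; apply: eq_bigr => k _.
under eq_bigr do rewrite sum_by_PP.
exact: exchange_big.
Qed.

Section BlockSums.
Variables (R : comNzRingType) (n : nat).
Implicit Types P Q : {ffun bvec n -> R}.

Lemma margE P c k i : marg P c k i = \sum_(y | PP y == k) (y i == c)%:R * P y.
Proof.
rewrite /marg big_andbC big_mkcondr; apply: eq_bigr => y _.
by rewrite mulr_natl mulrb.
Qed.

Lemma mass_mul P Q k l :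
  mass P k * mass Q l = \sum_(yh | PP yh == k) \sum_(yc | PP yc == l) P yh * Q yc.
Proof. exact: big_distrlr. Qed.

Lemma dotv_marg P Q c k l :
  dotv (marg P c k) (marg Q c l) =
  \sum_(yh | PP yh == k) \sum_(yc | PP yc == l) P yh * Q yc * (agree c yh yc)%:R.
Proof.
rewrite /dotv; under eq_bigr do rewrite !margE big_distrlr.
rewrite exchange_big; apply: eq_bigr => yh _.
rewrite exchange_big; apply: eq_bigr => yc _.
rewrite natr_sum mulr_sumr; apply: eq_bigr => i _.
by rewrite /= -mulnb natrM; ring.
Qed.

End BlockSums.

Lemma block_sum_metric_term (R : comUnitRingType) n (P Q : {ffun bvec n -> R})
    (alpha beta phi gamma : R) k l :
  \sum_(yh | PP yh == k) \sum_(yc | PP yc == l)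
    P yh * Q yc * ((alpha * (TP yh yc)%:R + beta * (TN yh yc)%:R + phi) / gamma)
  = gamma^-1 * (alpha * dotv (marg P true k) (marg Q true l)
                + beta * dotv (marg P false k) (marg Q false l)
                + phi * mass P k * mass Q l).
Proof.
rewrite !dotv_marg -mulrA mass_mul !mulr_sumr -!big_split mulr_sumr.
apply: eq_bigr => yh _; rewrite !mulr_sumr -!big_split mulr_sumr.
apply: eq_bigr => yc _; rewrite /= TP_agree TN_agree; ring.
Qed.

Theorem theorem1 (R : realFieldType) (n J : nat) (hn : (1 <= n)%N)
    (a b : 'I_J -> R) (f g : 'I_J -> nat -> nat -> R)
    (hg : forall j (k l : nat), (k <= n)%N -> (l <= n)%N -> g j k l != 0)
    (P Q : {ffun bvec n -> R}) (hP : is_distr P) (hQ : is_distr Q) :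
  expect2 P Q (metric a b f g) =
  \sum_(0 <= k < n.+1) \sum_(0 <= l < n.+1) \sum_(j < J)
    (g j k l)^-1 * (a j * dotv (marg P true k) (marg Q true l)
                    + b j * dotv (marg P false k) (marg Q false l)
                    + f j k l * mass P k * mass Q l).
Proof.
rewrite /expect2 sum2_by_PP; apply: eq_bigr => k _; apply: eq_bigr => l _.
under [RHS]eq_bigr do rewrite -block_sum_metric_term.
rewrite [RHS]exchange_big; apply: eq_bigr => yh /eqP PPyh.
rewrite [RHS]exchange_big; apply: eq_bigr => yc /eqP APyc.
by rewrite /metric mulr_sumr PPyh [AP yc]APyc.
Qed.
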